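(* Let $K\ge2$, $m\ge1$, $C>0$, let $\mathbf{y}\in[K]^m$, let $\mathbf{Q}\in\mathbb{R}^{m\times m}$ be a symmetric positive semidefinite kernel matrix on the labeled nodes and $Q_{t1},\dots,Q_{tm}$ the kernel values of a test node $t$. For each class $c\in[K]$ let $\mathbf{y}^c\in\{-1,1\}^m$ with $y_i^c=1$ iff $y_i=c$, and $y_i'^c=1$ iff $y_i=c$ (else $0$). Let $\hat c$ be the originally predicted class (defined below). Set $M^c_{u_i}=\sum_jC|Q_{ij}|-1$, $M^c_{v_i}=\sum_jC|Q_{ij}|+1$, $p^L=-C\sum_{i=1}^m|Q_{ti}|$, $p^U=C\sum_{i=1}^m|Q_{ti}|$. Consider the MILP $$M(\mathbf{y}):\ \min\ p_{\hat c}-p^*$$ over $p^*\in\mathbb{R}$, $\mathbf{p}\in\mathbb{R}^K$, $b_c\in\{0,1\}$ ($c\ne\hat c$), and for each $c\in[K]$: $\boldsymbol\alpha^c,\tilde{\mathbf{y}}^c,\mathbf{z}^c,\mathbf{u}^c,\mathbf{v}^c\in\mathbb{R}^m$, $\tilde{\mathbf{y}}'^c,\mathbf{s}^c,\mathbf{t}^c\in\{0,1\}^m$, $\mathbf{R}^c\in\mathbb{R}^{m\times m}$, subject to: $\sum_{i=1}^m\big(1-\sum_{c=1}^Ky_i'^c\tilde y_i'^c\big)\le\lfloor\epsilon m\rfloor$; $\sum_{c=1}^K\tilde y_i'^c=1$ for all $i\in[m]$; $\sum_{c\ne\hat c}b_c=1$; for all $c\ne\hat c$: $p^*\ge p_c$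 and $p^*\le p_c+(1-b_c)(p^U-p^L)$; for all $c\in[K]$: $p_c=\sum_{i=1}^mz_i^cQ_{ti}$; for all $c\in[K]$ and $i,j\in[m]$: $\sum_{j}R^c_{ij}Q_{ij}-1-u_i^c+v_i^c=0$, $-C(1+\tilde y^c_i)\le R^c_{ij}+z^c_j\le C(1+\tilde y^c_i)$, $-C(1-\tilde y^c_i)\le R^c_{ij}-z^c_j\le C(1-\tilde y^c_i)$; for all $c\in[K]$, $i\in[m]$: $-\alpha_i^c\le z_i^c\le\alpha_i^c$, $\alpha^c_i-C(1-\tilde y^c_i)\le z_i^c\le C(1+\tilde y_i^c)-\alpha_i^c$, $u_i^c\le M^c_{u_i}s_i^c$, $\alpha_i^c\le C(1-s_i^c)$, $v_i^c\le M^c_{v_i}t_i^c$, $\alpha_i^c\ge Ct_i^c$, $u_i^c\ge0$, $v_i^c\ge0$, $\tilde y_i^c=2\tilde y_i'^c-1$. Then the prediction for node $t$ is certifiably robust if the optimal value of $M(\mathbf{y})$ is greater than zero and non-robust otherwise; equivalently, the optimal value equals $\min_{\tilde{\mathbf{y}}\in\mathcal{A}(\mathbf{y})}\big(p_{\hat c}(\tilde{\mathbf{y}})-\max_{c\ne\hat c}p_c(\tilde{\mathbf{y}})\big)$.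
   Context: Multi-class classification by one-vs-all kernel SVMs. For a binary label vector $\mathbf{w}\in\{-1,1\}^m$, the bias-free kernel SVM dual is $D(\mathbf{w}):\ \min_{\boldsymbol\alpha}-\sum_i\alpha_i+\tfrac12\sum_{i,j}w_iw_j\alpha_i\alpha_jQ_{ij}$ s.t. $0\le\alpha_i\le C$; $\mathcal{S}(\mathbf{w})$ is its set of optimal solutions. For multi-class labels $\tilde{\mathbf{y}}\in[K]^m$ and $c\in[K]$, let $\tilde{\mathbf{y}}^c\in\{-1,1\}^m$ with $\tilde y^c_i=1$ iff $\tilde y_i=c$, and define the class score $p_c(\tilde{\mathbf{y}})=\sum_{i=1}^m\tilde y^c_i\alpha^c_iQ_{ti}$ for any $\boldsymbol\alpha^c\in\mathcal{S}(\tilde{\mathbf{y}}^c)$ (this value does not depend on the choice of optimal $\boldsymbol\alpha^c$). The predicted class is $\arg\max_cp_c$; $\hat c$ is the predicted class for the clean labels $\mathbf{y}$. The adversary chooses $\tilde{\mathbf{y}}\in\mathcal{A}(\mathbf{y})=\{\tilde{\mathbf{y}}\in[K]^m:\|\tilde{\mathbf{y}}-\mathbf{y}\|_0\le\lfloor\epsilon m\rfloor\}$, $\epsilon\in[0,1]$. The prediction is certifiably robust if $p_{\hat c}(\tilde{\mathbf{y}})-\max_{c\ne\hat c}p_c(\tilde{\mathbf{y}})>0$ for all $\tilde{\mathbf{y}}\in\mathcal{A}(\mathbf{y})$. *)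

From HB Require Import structures.
From mathcomp Require Import all_boot all_order all_algebra.
From mathcomp Require Import reals.
From Stdlib Require Import ClassicalEpsilon.
Set Implicit Arguments. Unset Strict Implicit. Unset Printing Implicit Defensive.
Import Order.TTheory GRing.Theory Num.Theory.
Local Open Scope ring_scope.

Section SVM.
Variables (R : realType) (K m : nat) (C : R) (Q : 'M[R]_m) (Qt : 'rV[R]_m).

Definition psd n (A : 'M[R]_n) : Prop := forall x : 'rV[R]_n, 0 <= (x *m A *m x^T) 0 0.

(* bias-free kernel SVM dual D(w) *)
Definition dual_obj (w alpha : 'I_m -> R) : R :=
  - (\sum_i alpha i) + 2^-1 * \sum_i \sum_j w i * w j * alpha i * alpha j * Q i j.
Definition dual_feas (alpha : 'I_m -> R) : Prop := forall i, 0 <= alpha i <= C.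
Definition dual_opt (w alpha : 'I_m -> R) : Prop :=
  dual_feas alpha /\ forall beta, dual_feas beta -> dual_obj w alpha <= dual_obj w beta.

Definition binlab (ytil : 'I_m -> 'I_K) (c : 'I_K) (i : 'I_m) : R :=
  if ytil i == c then 1 else -1.

Definition opt_alpha (ytil : 'I_m -> 'I_K) (c : 'I_K) : 'I_m -> R :=
  epsilon (inhabits (fun _ => 0)) (dual_opt (binlab ytil c)).

Definition score (ytil : 'I_m -> 'I_K) (c : 'I_K) : R :=
  \sum_i binlab ytil c i * opt_alpha ytil c i * Qt 0 i.

(* max_{c <> chat} p_c(ytil) (the default of the big max is one of the
   maximised values, so it does not affect the result when K >= 2) *)
Definition max_other (ytil : 'I_m -> 'I_K) (chat : 'I_K) : R :=
  let d := match [pick c | c != chat] with Some c0 => score ytil c0 | None => 0 end in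
  \big[Num.max/d]_(c | c != chat) score ytil c.

Definition margin (ytil : 'I_m -> 'I_K) (chat : 'I_K) : R :=
  score ytil chat - max_other ytil chat.

Definition admissible (eps : R) (y ytil : 'I_m -> 'I_K) : Prop :=
  (#|[pred i | ytil i != y i]|%:Z <= Num.floor (eps * m%:R))%R.

Definition cert_robust (eps : R) (y : 'I_m -> 'I_K) (chat : 'I_K) : Prop :=
  forall ytil, admissible eps y ytil -> 0 < margin ytil chat.

Record milp_var := MilpVar {
  pstar : R;
  pv : 'I_K -> R;
  bv : 'I_K -> R;
  alphav : 'I_K -> 'I_m -> R;
  ytv : 'I_K -> 'I_m -> R;
  zv : 'I_K -> 'I_m -> R;
  uv : 'I_K -> 'I_m -> R;
  vv : 'I_K -> 'I_m -> R;
  ytpv : 'I_K -> 'I_m -> R;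
  sv : 'I_K -> 'I_m -> R;
  tv : 'I_K -> 'I_m -> R;
  Rv : 'I_K -> 'I_m -> 'I_m -> R }.

Definition is01 (x : R) : Prop := x = 0 \/ x = 1.

Definition onehot (y : 'I_m -> 'I_K) (c : 'I_K) (i : 'I_m) : R :=
  if y i == c then 1 else 0.

Definition Mu (i : 'I_m) : R := \sum_j C * `|Q i j| - 1.
Definition Mv (i : 'I_m) : R := \sum_j C * `|Q i j| + 1.
Definition pL : R := - (C * \sum_i `|Qt 0 i|).
Definition pU : R := C * \sum_i `|Qt 0 i|.

Definition milp_feasible (eps : R) (y : 'I_m -> 'I_K) (chat : 'I_K) (x : milp_var) : Prop :=
  (forall c, c != chat -> is01 (bv x c)) /\
  (forall c i, is01 (ytpv x c i) /\ is01 (sv x c i) /\ is01 (tv x c i)) /\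
  (\sum_i (1 - \sum_c onehot y c i * ytpv x c i) <= (Num.floor (eps * m%:R))%:~R) /\
  (forall i, \sum_c ytpv x c i = 1) /\
  (\sum_(c | c != chat) bv x c = 1) /\
  (forall c, c != chat ->
     pv x c <= pstar x /\ pstar x <= pv x c + (1 - bv x c) * (pU - pL)) /\
  (forall c, pv x c = \sum_i zv x c i * Qt 0 i) /\
  (forall c i,
     \sum_j Rv x c i j * Q i j - 1 - uv x c i + vv x c i = 0) /\
  (forall c i j,
     - (C * (1 + ytv x c i)) <= Rv x c i j + zv x c j <= C * (1 + ytv x c i) /\
     - (C * (1 - ytv x c i)) <= Rv x c i j - zv x c j <= C * (1 - ytv x c i)) /\
  (forall c i,
     - alphav x c i <= zv x c i <= alphav x c i /\
     alphav x c i - C * (1 - ytv x c i) <= zv x c i <= C * (1 + ytv x c i) - alphav x c i /\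
     uv x c i <= Mu i * sv x c i /\
     alphav x c i <= C * (1 - sv x c i) /\
     vv x c i <= Mv i * tv x c i /\
     C * tv x c i <= alphav x c i /\
     0 <= uv x c i /\ 0 <= vv x c i /\
     ytv x c i = 2 * ytpv x c i - 1).

Definition milp_obj (chat : 'I_K) (x : milp_var) : R := pv x chat - pstar x.

Definition milp_optval (eps : R) (y : 'I_m -> 'I_K) (chat : 'I_K) (v : R) : Prop :=
  (exists x, milp_feasible eps y chat x /\ milp_obj chat x = v) /\
  (forall x, milp_feasible eps y chat x -> v <= milp_obj chat x).

Definition adv_optval (eps : R) (y : 'I_m -> 'I_K) (chat : 'I_K) (v : R) : Prop :=
  (exists ytil, admissible eps y ytil /\ margin ytil chat = v) /\
  (forall ytil, admissible eps y ytil -> v <= margin ytil chat).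

End SVM.

From mathcomp Require Import all_boot all_order all_algebra.
From mathcomp Require Import reals.
From mathcomp Require Import ring lra.
From mathcomp Require Import classical_sets topology normedtype derive matrix_normedtype.
From Stdlib Require Import ClassicalEpsilon.

Set Implicit Arguments.
Unset Strict Implicit.
Unset Printing Implicit Defensive.

Import Order.TTheory GRing.Theory Num.Theory.
Import numFieldNormedType.Exports.
Local Open Scope ring_scope.

(* The dual D(w) is a convex quadratic program over a box, so its optimal
   solutions are exactly the feasible points satisfying the KKT conditions
   "grad_i > 0 -> alpha_i = 0" and "grad_i < 0 -> alpha_i = C".  In the MILP,
   z = ytil * alpha and R_ij = ytil_i z_j are forced by the bilinear envelope
   constraints because ytil_i = +-1, u and v are the positive and negative parts
   of the gradient and the binaries s, t switch the complementarity on; the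
   binaries ytil' are a one-hot encoding of a relabelling within the budget, and
   b selects the largest competing score as p^*.  Hence the feasible points of
   M(y) correspond to the admissible relabellings, with objective equal to the
   margin, and the optimal value is the minimal margin over the finite set A(y).
   That the class scores are well defined rests on the augmented kernel being
   positive semidefinite: two optimal solutions differ by a direction d with
   (w d)^T Q (w d) = 0, and then Q_t (w d) = 0 as well. *)

Section RealContinuity.
Variables (R : realType) (T : topologicalType).
Implicit Types f g : T -> R.

Lemma continuous_addR f g : continuous f -> continuous g -> continuous (fun x => f x + g x).
Proof. by move=> cf cg x; exact: (continuousD (K:=R) (V:=R^o) (cf x) (cg x)). Qed.

Lemma continuous_mulR f g : continuous f -> continuous g -> continuous (fun x => f x * g x).
Proof. by move=> cf cg x; exact: (continuousM (cf x) (cg x)). Qed.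

Lemma continuous_oppR f : continuous f -> continuous (fun x => - f x).
Proof. by move=> cf x; exact: (continuousN (K:=R) (V:=R^o) (cf x)). Qed.

Lemma continuous_sumR n (F : 'I_n -> T -> R) :
  (forall i, continuous (F i)) -> continuous (fun x => \sum_i F i x).
Proof. by move=> cF; apply: (@continuous_big R^o _ +%R 0 xpredT add_continuous) => i _. Qed.

End RealContinuity.

Lemma dual_obj_continuous (R : realType) m (Q : 'M[R]_m) (w : 'I_m -> R) :
  continuous (fun v : 'rV[R]_m => dual_obj Q w (fun i => v ord0 i)).
Proof.
have coord i : continuous (fun v : 'rV[R]_m => v ord0 i) by exact: coord_continuous.
have cst (c : R) : continuous (fun _ : 'rV[R]_m => c) by move=> ?; exact: cst_continuous.
apply: continuous_addR; first by apply: continuous_oppR; apply: continuous_sumR.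
apply: continuous_mulR => //; apply: continuous_sumR => i; apply: continuous_sumR => j.
by do 4 apply: continuous_mulR => //.
Qed.

Lemma dual_opt_exists (R : realType) m (C : R) (Q : 'M[R]_m) (w : 'I_m -> R) :
  0 <= C -> exists alpha, dual_opt C Q w alpha.
Proof.
move=> C_ge0.
pose box : set 'rV[R]_m := fun v => forall i, (`[0, C]%classic : set R) (v ord0 i).
have box0 : (box !=set0)%classic by exists 0 => i /=; rewrite mxE in_itv /= lexx.
have box_compact : compact box.
  exact: (@rV_compact R m (fun _ => `[0, C]%classic) (fun _ => @segment_compact R 0 C)).
have [v] := EVT_min_rV box0 box_compact (continuous_subspaceT (@dual_obj_continuous _ _ Q w)).
rewrite inE => v_box v_min.
exists (fun i => v ord0 i); split=> [i|beta beta_feas].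
  by have := v_box i; rewrite /= in_itv.
have := v_min (\row_i beta i); rewrite inE.
have -> : (fun i => (\row_i beta i) ord0 i) = beta by apply: boolp.funext => i; rewrite mxE.
by apply=> i /=; rewrite mxE in_itv /=; exact: beta_feas.
Qed.

Lemma lin_beats_quad_near0 (R : realFieldType) (g h s : R) :
  0 <= h -> 0 < s -> 0 < g -> exists2 t, 0 < t <= s & 2^-1 * h * t ^+ 2 < g * t.
Proof.
move=> h_ge0 s_gt0 g_gt0; pose t := Num.min s (g / (h + 1)).
have t_gt0 : 0 < t by rewrite lt_min s_gt0 divr_gt0 // ltr_wpDl.
have t_le : t * (h + 1) <= g by rewrite -ler_pdivlMr ?ltr_wpDl // ge_min lexx orbT.
exists t; first by rewrite t_gt0 ge_min lexx.
by rewrite expr2; nra.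
Qed.

Lemma quad_form_block (R : comRingType) m (Q : 'M[R]_m) (q l : R) (Qt x : 'rV[R]_m) :
  let z := row_mx (l%:M : 'M_1) x in
  (z *m block_mx (q%:M : 'M_1) Qt Qt^T Q *m z^T) 0 0 =
  l ^+ 2 * q + 2 * l * (Qt *m x^T) 0 0 + (x *m Q *m x^T) 0 0.
Proof.
rewrite /= mul_row_block tr_row_mx mul_row_col !mul_scalar_mx tr_scalar_mx.
rewrite !mul_mx_scalar mulmxDl -scalemxAl -[x *m Qt^T]trmxK trmx_mul trmxK.
by rewrite !mxE /= mulr1n; ring.
Qed.

Lemma nonneg_quadratic_lin0 (R : realFieldType) (q a : R) :
  (forall l, 0 <= l ^+ 2 * q + 2 * l * a) -> a = 0.
Proof.
(* at l = -a / e with e = |q| + 1 the value is (a / e)^2 (q - 2 e), and q < 2 e *)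
move=> nonneg; pose e := `|q| + 1.
have e_gt0 : 0 < e by rewrite ltr_wpDl.
have q_lt : q < 2 * e by rewrite /e; have := ler_norm q; have := normr_ge0 q; lra.
have := nonneg (- (a / e)).
have -> : (- (a / e)) ^+ 2 * q + 2 * - (a / e) * a = (a / e) ^+ 2 * (q - 2 * e).
  by field; rewrite gt_eqF.
rewrite nmulr_lge0 ?subr_lt0 // => ae_sqr_le0; apply/eqP.
have : a / e == 0 by rewrite -sqrf_eq0 eq_le sqr_ge0 ae_sqr_le0.
by rewrite mulf_eq0 invr_eq0 (gt_eqF e_gt0) orbF.
Qed.

Lemma psd_block_quad0 (R : realType) m (Q : 'M[R]_m) (q : R) (Qt : 'rV[R]_m) :
  psd (block_mx (q%:M : 'M_1) Qt Qt^T Q) ->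
  forall x : 'rV[R]_m, (x *m Q *m x^T) 0 0 = 0 -> (Qt *m x^T) 0 0 = 0.
Proof.
move=> B_psd x xQx0; apply: (@nonneg_quadratic_lin0 _ q) => l.
by have := B_psd (row_mx (l%:M : 'M_1) x); rewrite quad_form_block xQx0 addr0.
Qed.

Definition sign_vector (R : numDomainType) m (w : 'I_m -> R) : Prop :=
  forall i, w i = 1 \/ w i = -1.

Lemma norm_sign_vector (R : numDomainType) m (w : 'I_m -> R) i : sign_vector w -> `|w i| = 1.
Proof. by move=> /(_ i)[] ->; rewrite ?normrN normr1. Qed.

Lemma max0_parts (R : realDomainType) (x : R) :
  [\/ 0 < x /\ Num.max x 0 = x /\ Num.max (- x) 0 = 0,
      x < 0 /\ Num.max x 0 = 0 /\ Num.max (- x) 0 = - x |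
      x = 0 /\ Num.max x 0 = 0 /\ Num.max (- x) 0 = 0].
Proof.
case: (ltgtP x 0) => x_sign; [apply: Or32 | apply: Or31 | apply: Or33]; do !split=> //.
- by apply: max_l; rewrite oppr_ge0 ltW.
- by apply: max_r; rewrite oppr_le0 ltW.
- by rewrite x_sign oppr0 maxxx.
Qed.

Section DualOptimality.
Variables (R : realType) (m : nat) (C : R) (Q : 'M[R]_m).
Hypotheses (C_ge0 : 0 <= C) (Q_sym : forall i j, Q i j = Q j i) (Q_psd : psd Q).
Implicit Types (w a b d : 'I_m -> R).

Definition dual_grad w a i : R := \sum_j w i * w j * a j * Q i j - 1.
Definition dual_quad w d : R := \sum_i \sum_j w i * w j * d i * d j * Q i j.

Definition dual_kkt w a : Prop :=
  forall i, (0 < dual_grad w a i -> a i = 0) /\ (dual_grad w a i < 0 -> a i = C).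

Lemma dual_obj_shift w a d :
  dual_obj Q w (fun i => a i + d i) =
  dual_obj Q w a + \sum_i dual_grad w a i * d i + 2^-1 * dual_quad w d.
Proof.
have cross : \sum_i \sum_j w i * w j * a i * d j * Q i j =
             \sum_i (\sum_j w i * w j * a j * Q i j) * d i.
  rewrite exchange_big /=; apply: eq_bigr => i _; rewrite mulr_suml.
  by apply: eq_bigr => j _; rewrite (Q_sym j i); ring.
have cross' : \sum_i \sum_j w i * w j * d i * a j * Q i j =
              \sum_i (\sum_j w i * w j * a j * Q i j) * d i.
  by apply: eq_bigr => i _; rewrite mulr_suml; apply: eq_bigr => j _; ring.
have expand : \sum_i \sum_j w i * w j * (a i + d i) * (a j + d j) * Q i j =
  \sum_i \sum_j w i * w j * a i * a j * Q i j +
  2 * \sum_i (\sum_j w i * w j * a j * Q i j) * d i + dual_quad w d.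
  rewrite mulr2n mulrDl mul1r -{1}cross -cross' -!big_split /=.
  by apply: eq_bigr => i _; rewrite -!big_split /=; apply: eq_bigr => j _; ring.
have lin : \sum_i dual_grad w a i * d i =
           \sum_i (\sum_j w i * w j * a j * Q i j) * d i - \sum_i d i.
  by rewrite -sumrB; apply: eq_bigr => i _; rewrite /dual_grad; ring.
by rewrite /dual_obj expand big_split /= lin; field.
Qed.

Lemma dual_obj_diff w a b :
  dual_obj Q w b =
  dual_obj Q w a + \sum_i dual_grad w a i * (b i - a i) + 2^-1 * dual_quad w (fun i => b i - a i).
Proof.
rewrite -dual_obj_shift; congr (dual_obj Q w _).
by apply: boolp.funext => i; rewrite addrC subrK.
Qed.

Lemma dual_quad_mx w d :
  dual_quad w d = ((\row_i (w i * d i)) *m Q *m (\row_i (w i * d i))^T) 0 0.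
Proof.
symmetry; rewrite mxE /dual_quad exchange_big /=; apply: eq_bigr => i _.
rewrite mxE mulr_suml; apply: eq_bigr => j _; rewrite !mxE; ring.
Qed.

Lemma dual_quad_ge0 w d : 0 <= dual_quad w d.
Proof. by rewrite dual_quad_mx; exact: Q_psd. Qed.

Definition coord_shift (i : 'I_m) (t : R) : 'I_m -> R := fun k => if k == i then t else 0.

Lemma dual_quad_coord_shift w i t :
  dual_quad w (coord_shift i t) = w i * w i * Q i i * t ^+ 2.
Proof.
rewrite /dual_quad (bigD1 i) //= [X in _ + X]big1 => [|k ki]; last first.
  by apply: big1 => j _; rewrite /coord_shift (negbTE ki) mulr0 !mul0r.
rewrite addr0 (bigD1 i) //= [X in _ + X]big1 => [|j ji]; last first.
  by rewrite /coord_shift (negbTE ji) mulr0 mul0r.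
by rewrite /coord_shift eqxx addr0; ring.
Qed.

Lemma dual_obj_coord_shift w a i t :
  dual_obj Q w (fun k => a k + coord_shift i t k) =
  dual_obj Q w a + dual_grad w a i * t + 2^-1 * (w i * w i * Q i i) * t ^+ 2.
Proof.
rewrite dual_obj_shift dual_quad_coord_shift (bigD1 i) //= big1 => [|k ki]; last first.
  by rewrite /coord_shift (negbTE ki) mulr0.
by rewrite /coord_shift eqxx addr0; ring.
Qed.

Lemma dual_diag_ge0 w i : 0 <= w i * w i * Q i i.
Proof.
by have := dual_quad_ge0 w (coord_shift i 1); rewrite dual_quad_coord_shift expr1n mulr1.
Qed.

Lemma dual_opt_coord_step w a i t :
  dual_opt C Q w a -> 0 <= a i + t <= C ->
  0 <= dual_grad w a i * t + 2^-1 * (w i * w i * Q i i) * t ^+ 2.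
Proof.
move=> [a_feas a_min] ait_box.
have := a_min (fun k => a k + coord_shift i t k); rewrite dual_obj_coord_shift.
have shifted_feas : dual_feas C (fun k => a k + coord_shift i t k).
  by move=> k; rewrite /coord_shift; case: eqP => [->//|_]; rewrite addr0.
by move=> /(_ shifted_feas); lra.
Qed.

Lemma dual_opt_kkt w a : dual_opt C Q w a -> dual_kkt w a.
Proof.
move=> a_opt i; set g := dual_grad w a i.
have h_ge0 := dual_diag_ge0 w i; set h := w i * w i * Q i i in h_ge0.
have /andP[a_ge0 a_leC] := a_opt.1 i.
split=> g_sign; apply/eqP.
- rewrite eq_le a_ge0 andbT leNgt; apply/negP => a_gt0.
  have [t /andP[t_gt0 t_le] gain] := lin_beats_quad_near0 h_ge0 a_gt0 g_sign.
  have step_box : 0 <= a i + - t <= C by apply/andP; split; lra.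
  have := dual_opt_coord_step a_opt step_box; rewrite sqrrN -/g -/h; lra.
- rewrite eq_le a_leC /= leNgt; apply/negP => a_ltC.
  have gap_gt0 : 0 < C - a i by rewrite subr_gt0.
  have ng_gt0 : 0 < - g by rewrite oppr_gt0.
  have [t /andP[t_gt0 t_le] gain] := lin_beats_quad_near0 h_ge0 gap_gt0 ng_gt0.
  have step_box : 0 <= a i + t <= C by apply/andP; split; lra.
  have := dual_opt_coord_step a_opt step_box; rewrite -/g -/h; lra.
Qed.

Lemma kkt_grad_dir_ge0 w a b :
  dual_feas C a -> dual_kkt w a -> dual_feas C b ->
  0 <= \sum_i dual_grad w a i * (b i - a i).
Proof.
move=> a_feas a_kkt b_feas; apply: sumr_ge0 => i _.
have /andP[b_ge0 b_leC] := b_feas i.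
case: (ltgtP (dual_grad w a i) 0) => [g_lt0|g_gt0|->]; last by rewrite mul0r.
  by rewrite ((a_kkt i).2 g_lt0); apply: mulr_le0; [exact: ltW | lra].
by rewrite ((a_kkt i).1 g_gt0); apply: mulr_ge0; [exact: ltW | lra].
Qed.

Lemma kkt_dual_opt w a : dual_feas C a -> dual_kkt w a -> dual_opt C Q w a.
Proof.
move=> a_feas a_kkt; split=> // b b_feas; rewrite (dual_obj_diff w a b).
have := kkt_grad_dir_ge0 a_feas a_kkt b_feas.
have := dual_quad_ge0 w (fun k => b k - a k); lra.
Qed.

Lemma dual_opt_quad_diff w a b :
  dual_opt C Q w a -> dual_opt C Q w b -> dual_quad w (fun i => b i - a i) = 0.
Proof.
move=> a_opt b_opt.
have := kkt_grad_dir_ge0 a_opt.1 (dual_opt_kkt a_opt) b_opt.1.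
have := dual_quad_ge0 w (fun i => b i - a i).
have := a_opt.2 _ b_opt.1; have := b_opt.2 _ a_opt.1; rewrite (dual_obj_diff w a b); lra.
Qed.

(* The per-class constraints of the MILP M(y), with the label vector w in place
   of ytil^c and Rm in place of R^c. *)
Definition kkt_encoding (w alpha z u v s t : 'I_m -> R) (Rm : 'I_m -> 'I_m -> R) : Prop :=
  [/\ forall i, is01 (s i) /\ is01 (t i),
      forall i, \sum_j Rm i j * Q i j - 1 - u i + v i = 0,
      forall i j, - (C * (1 + w i)) <= Rm i j + z j <= C * (1 + w i) /\
                  - (C * (1 - w i)) <= Rm i j - z j <= C * (1 - w i),
      forall i, - alpha i <= z i <= alpha i /\
                alpha i - C * (1 - w i) <= z i <= C * (1 + w i) - alpha i &
      forall i, [/\ u i <= Mu C Q i * s i, alpha i <= C * (1 - s i),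
                    v i <= Mv C Q i * t i, C * t i <= alpha i & 0 <= u i /\ 0 <= v i]].

(* with w_i = +-1, half of the envelope constraints collapse to equalities *)
Lemma kkt_encoding_sound w alpha z u v s t Rm :
  sign_vector w -> kkt_encoding w alpha z u v s t Rm ->
  (forall i, z i = w i * alpha i) /\ dual_opt C Q w alpha.
Proof.
move=> w_pm [st01 grad_eq envelope z_box kkt_sides].
have z_eq i : z i = w i * alpha i.
  by have := z_box i; case: (w_pm i) => -> [/andP[? ?] /andP[? ?]]; lra.
have Rm_eq i j : Rm i j = w i * z j.
  by have := envelope i j; case: (w_pm i) => -> [/andP[? ?] /andP[? ?]]; lra.
have alpha_feas : dual_feas C alpha.
  move=> i; have [/andP[? ?] _] := z_box i.
  have [_ + _ _ _] := kkt_sides i; have := C_ge0.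
  by case: (st01 i).1 => -> *; apply/andP; split; lra.
have grad_uv i : dual_grad w alpha i = u i - v i.
  have := grad_eq i; rewrite /dual_grad.
  under eq_bigr => j _ do rewrite Rm_eq z_eq mulrA.
  lra.
split=> //; apply: kkt_dual_opt => // i; rewrite grad_uv.
have [u_s alpha_s v_t alpha_t [u_ge0 v_ge0]] := kkt_sides i.
have [s01 t01] := st01 i.
split=> g_sign.
- by case: s01 => s_i; rewrite s_i in u_s alpha_s; have := alpha_feas i; lra.
- by case: t01 => t_i; rewrite t_i in v_t alpha_t; have := alpha_feas i; lra.
Qed.

Lemma dual_grad_bound w alpha i :
  sign_vector w -> dual_feas C alpha ->
  `|dual_grad w alpha i + 1| <= \sum_j C * `|Q i j|.
Proof.
move=> w_pm alpha_feas; rewrite /dual_grad subrK.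
apply: le_trans (ler_norm_sum _ _ _) _; apply: ler_sum => j _.
have /andP[alpha_ge0 alpha_leC] := alpha_feas j.
by rewrite !normrM !(norm_sign_vector _ w_pm) !mul1r ger0_norm // ler_wpM2r.
Qed.

Lemma kkt_encoding_complete w alpha :
  sign_vector w -> dual_opt C Q w alpha ->
  let g := dual_grad w alpha in
  kkt_encoding w alpha (fun i => w i * alpha i)
    (fun i => Num.max (g i) 0) (fun i => Num.max (- g i) 0)
    (fun i => if 0 < g i then 1 else 0) (fun i => if g i < 0 then 1 else 0)
    (fun i j => w i * (w j * alpha j)).
Proof.
move=> w_pm alpha_opt g.
split=> [i|i|i j|i|i].
- by split; case: ifP; rewrite /is01; auto.
- have -> : \sum_j w i * (w j * alpha j) * Q i j = g i + 1.
    by rewrite /g /dual_grad subrK; apply: eq_bigr => j _; rewrite mulrA.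
  by case: (max0_parts (g i)) => -[? [-> ->]]; lra.
- have /andP[? ?] := alpha_opt.1 j.
  by case: (w_pm i) => ->; case: (w_pm j) => ->; split; apply/andP; split; lra.
- have /andP[? ?] := alpha_opt.1 i.
  by case: (w_pm i) => ->; split; apply/andP; split; lra.
have /andP[? ?] := alpha_opt.1 i.
have := dual_grad_bound i w_pm alpha_opt.1; rewrite ler_norml -/g => /andP[? ?].
have [kkt_pos kkt_neg] := dual_opt_kkt alpha_opt i; rewrite -/g in kkt_pos kkt_neg.
rewrite /Mu /Mv; case: (max0_parts (g i)) => -[g_sign [-> ->]].
- by rewrite g_sign (lt_gtF g_sign) kkt_pos //; split; lra.
- by rewrite g_sign (lt_gtF g_sign) kkt_neg //; split; lra.
- by rewrite g_sign ltxx; split; lra.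
Qed.

End DualOptimality.

Lemma bigmax_attained (I : finType) (R : realDomainType) (P : pred I) (F : I -> R) d p j :
  P j -> d <= p -> (forall i, P i -> F i <= p) -> p <= F j ->
  \big[Num.max/d]_(i | P i) F i = p.
Proof.
move=> Pj d_le F_le p_le; apply/eqP; rewrite eq_le bigmax_le //=.
exact: le_trans p_le (le_bigmax_cond _ _ Pj).
Qed.

Lemma exists_arg_min_fun (aT rT : finType) (R : realDomainType) (P : pred (aT -> rT))
    (F : (aT -> rT) -> R) f0 :
  P f0 -> exists2 f, P f & forall g, P g -> F f <= F g.
Proof.
have ffunK (g : aT -> rT) : (finfun g : aT -> rT) = g by apply: boolp.funext => x; rewrite ffunE.
move=> Pf0; have Pf0' : P (finfun f0) by rewrite ffunK.
have [f Pf f_min] :=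
  @arg_minP _ _ _ (finfun f0) (fun f : {ffun aT -> rT} => P f) (fun f => F f) Pf0'.
by exists f => // g Pg; have := f_min (finfun g); rewrite ffunK; apply.
Qed.

Section MaxSelection.
Variables (R : realType) (K : nat) (chat : 'I_K).

(* the big-M encoding of p^* = max_{c <> chat} p_c through the selector b *)
Definition max_selection (b p : 'I_K -> R) (ps width : R) : Prop :=
  [/\ forall c, c != chat -> is01 (b c), \sum_(c | c != chat) b c = 1 &
      forall c, c != chat -> p c <= ps /\ ps <= p c + (1 - b c) * width].

Lemma max_selection_attained b p ps width :
  max_selection b p ps width ->
  (forall c, c != chat -> p c <= ps) /\ exists2 c0, c0 != chat & ps <= p c0.
Proof.
move=> [b01 b_sum bounds]; split=> [c nc|]; first by have [] := bounds c nc.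
have /existsP[c0 /andP[nc0 /eqP b1]] : [exists c, (c != chat) && (b c == 1)].
  apply/negbNE/negP => /existsPn-none; move: b_sum; rewrite big1 => [/esym/eqP|c nc].
    by rewrite oner_eq0.
  by case: (b01 c nc) => // b_c; have := none c; rewrite nc b_c eqxx.
by exists c0 => //; have [_] := bounds c0 nc0; rewrite b1 subrr mul0r addr0.
Qed.

Lemma max_selection_argmax p c0 width :
  c0 != chat -> (forall c, c != chat -> p c <= p c0 <= p c + width) ->
  max_selection (fun c => if c == c0 then 1 else 0) p (p c0) width.
Proof.
move=> nc0 c0_max; split=> [c _|| c nc].
- by case: eqP; [right | left].
- by rewrite (bigD1 c0) //= eqxx big1 ?addr0 // => c /andP[_ /negbTE ->].
- have /andP[? ?] := c0_max c nc.
  by split=> //; case: eqP => [->|_]; rewrite ?subrr ?mul0r ?subr0 ?mul1r ?addr0.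
Qed.

Lemma exists_argmax_other (F : 'I_K -> R) :
  (2 <= K)%N -> exists2 c0, c0 != chat & forall c, c != chat -> F c <= F c0.
Proof.
move=> K_ge2; have K_gt0 : (0 < K)%N by apply: leq_trans K_ge2.
have [c1 nc1] : exists c1 : 'I_K, c1 != chat.
  case: (eqVneq chat (Ordinal K_gt0)) => [->|nchat0].
    by exists (Ordinal K_ge2); apply/eqP => -[].
  by exists (Ordinal K_gt0); rewrite eq_sym.
by have [c0 nc0 c0_max] := @arg_maxP _ _ _ c1 (fun c => c != chat) F nc1; exists c0.
Qed.

End MaxSelection.

Section Labels.
Context {R : realType} {K m : nat}.
Implicit Types (y yt : 'I_m -> 'I_K) (c : 'I_K).

Lemma binlab_sign yt c : sign_vector (binlab R yt c).
Proof. by move=> i; rewrite /binlab; case: eqP; [left | right]. Qed.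

Lemma binlab_onehot yt c i : binlab R yt c i = 2 * onehot R yt c i - 1.
Proof. by rewrite /binlab /onehot; case: eqP => _; ring. Qed.

Lemma onehot_decode (e : 'I_K -> 'I_m -> R) :
  (forall c i, is01 (e c i)) -> (forall i, \sum_c e c i = 1) ->
  exists yt, forall c i, e c i = onehot R yt c i.
Proof.
move=> e01 e_sum.
have hot i : exists c, e c i = 1.
  have /existsP[c /eqP e1] : [exists c, e c i == 1]; last by exists c.
  apply/negbNE/negP => /existsPn-none; have := e_sum i; rewrite big1 => [/esym/eqP|c _].
    by rewrite oner_eq0.
  by case: (e01 c i) => // e1; have := none c; rewrite e1 eqxx.
have [yt ytP] := fin_all_exists hot; exists yt => c i; rewrite /onehot.
case: eqP => [<-//|ne]; case: (e01 c i) => // e1.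
have := e_sum i; rewrite (bigD1 (yt i)) //= (bigD1 c) /=; last by rewrite eq_sym; apply/eqP.
rewrite ytP e1; have : 0 <= \sum_(k | (k != yt i) && (k != c)) e k i.
  by apply: sumr_ge0 => k _; case: (e01 k i) => ->.
lra.
Qed.

Lemma onehot_mismatch_sum y yt :
  \sum_i (1 - \sum_c onehot R y c i * onehot R yt c i) = #|[pred i | yt i != y i]|%:R.
Proof.
transitivity (\sum_i (if yt i != y i then 1 else 0 : R)); last first.
  by rewrite -big_mkcond sumr_const.
apply: eq_bigr => i _; rewrite (bigD1 (y i)) //= big1 => [|c nc]; last first.
  by rewrite /onehot eq_sym (negbTE nc) mul0r.
by rewrite /onehot eqxx mul1r addr0; case: eqP; rewrite ?subrr ?subr0.
Qed.

Lemma admissibleE (eps : R) y yt :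
  admissible eps y yt <->
  \sum_i (1 - \sum_c onehot R y c i * onehot R yt c i) <= (Num.floor (eps * m%:R))%:~R.
Proof. by rewrite onehot_mismatch_sum /admissible -(ler_int R) pmulrn. Qed.

Lemma admissible_refl (eps : R) y : 0 <= eps -> admissible eps y y.
Proof.
move=> eps_ge0; rewrite /admissible (eq_card0 (_ : [pred i | y i != y i] =i pred0)).
  by rewrite floor_ge0 mulr_ge0 ?ler0n.
by move=> i; rewrite !inE eqxx.
Qed.

Lemma admissible_arg_min (eps : R) y (F : ('I_m -> 'I_K) -> R) :
  0 <= eps -> exists2 y0, admissible eps y y0 & forall yt, admissible eps y yt -> F y0 <= F yt.
Proof.
move=> eps_ge0.
exact: (exists_arg_min_fun
  (P := fun yt => #|[pred i | yt i != y i]|%:Z <= Num.floor (eps * m%:R)) F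
  (admissible_refl y eps_ge0)).
Qed.

End Labels.

Section Scores.
Variables (R : realType) (K m : nat) (C : R) (Q : 'M[R]_m) (Qt : 'rV[R]_m) (q : R).
Hypotheses (C_ge0 : 0 <= C) (Q_sym : forall i j, Q i j = Q j i) (Q_psd : psd Q)
  (B_psd : psd (block_mx (q%:M : 'M_1) Qt Qt^T Q)).
Implicit Types (yt : 'I_m -> 'I_K) (c chat : 'I_K).

Lemma opt_alphaP yt c : dual_opt C Q (binlab R yt c) (opt_alpha C Q yt c).
Proof. by apply: epsilon_spec; exact: dual_opt_exists. Qed.

Lemma score_opt yt c a :
  dual_opt C Q (binlab R yt c) a -> score C Q Qt yt c = \sum_i binlab R yt c i * a i * Qt 0 i.
Proof.
move=> a_opt; set w := binlab R yt c; set b := opt_alpha C Q yt c.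
have := dual_opt_quad_diff Q_sym Q_psd a_opt (opt_alphaP yt c).
rewrite dual_quad_mx => /(psd_block_quad0 B_psd); rewrite mxE => diff0.
apply/eqP; rewrite -subr_eq0 /score -/w -/b -sumrB; apply/eqP; rewrite -[RHS]diff0.
by apply: eq_bigr => i _; rewrite !mxE -/w -/b; ring.
Qed.

Lemma score_bound yt c : `|score C Q Qt yt c| <= C * \sum_i `|Qt 0 i|.
Proof.
rewrite /score mulr_sumr; apply: le_trans (ler_norm_sum _ _ _) _; apply: ler_sum => i _.
have /andP[alpha_ge0 alpha_leC] := (opt_alphaP yt c).1 i.
by rewrite !normrM (norm_sign_vector _ (binlab_sign yt c)) mul1r ger0_norm // ler_wpM2r.
Qed.

Lemma max_other_eq yt chat c0 p :
  c0 != chat -> (forall c, c != chat -> score C Q Qt yt c <= p) -> p <= score C Q Qt yt c0 ->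
  max_other C Q Qt yt chat = p.
Proof.
move=> nc0 p_ub p_le; rewrite /max_other /=.
apply: (bigmax_attained (P := fun c => c != chat) nc0 _ p_ub p_le).
by case: pickP => [c /= nc | /(_ c0)/=]; [exact: p_ub | rewrite nc0].
Qed.

End Scores.

Section Certificate.
Variables (R : realType) (K m : nat) (C eps : R) (y : 'I_m -> 'I_K) (Q : 'M[R]_m)
  (Qt : 'rV[R]_m) (chat : 'I_K) (q : R).
Hypotheses (C_gt0 : 0 < C) (Q_sym : forall i j, Q i j = Q j i) (Q_psd : psd Q)
  (B_psd : psd (block_mx (q%:M : 'M_1) Qt Qt^T Q)).

Let C_ge0 : 0 <= C := ltW C_gt0.

Lemma milp_feasibleP x :
  milp_feasible C Q Qt eps y chat x <->
  [/\ (forall c i, is01 (ytpv x c i)) /\ (forall i, \sum_c ytpv x c i = 1),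
      \sum_i (1 - \sum_c onehot R y c i * ytpv x c i) <= (Num.floor (eps * m%:R))%:~R,
      max_selection chat (bv x) (pv x) (pstar x) (pU C Qt - pL C Qt),
      forall c, pv x c = \sum_i zv x c i * Qt 0 i &
      forall c, (forall i, ytv x c i = 2 * ytpv x c i - 1) /\
        kkt_encoding C Q (ytv x c) (alphav x c) (zv x c) (uv x c) (vv x c) (sv x c) (tv x c)
          (Rv x c)].
Proof.
split.
- move=> [b01 [int01 [budget [onehot1 [b_sum [p_sel [p_def [grad_eq [envelope box]]]]]]]]].
  split=> //; first by split=> [c i|//]; case: (int01 c i).
  move=> c; split=> [i|]; first by have [_ [_ [_ [_ [_ [_ [_ [_ ->]]]]]]]] := box c i.
  split=> [i | i | i j | i | i] //; first by have [_ [? ?]] := int01 c i.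
    by have [? [? _]] := box c i.
  by have [_ [_ [? [? [? [? [? [? _]]]]]]]] := box c i.
- move=> [[int01 onehot1] budget [b01 b_sum p_sel] p_def enc].
  split=> //; split=> [c i|]; first by have [_ [st01 _ _ _ _]] := enc c; have [? ?] := st01 i.
  do 5!split=> //; split=> [c i|]; first by have [_ [_ ? _ _ _]] := enc c.
  split=> [c i j|c i]; first by have [_ [_ _ ? _ _]] := enc c.
  have [ytv_def [_ _ _ z_box sides]] := enc c.
  by have [? ?] := z_box i; have [? ? ? ? [? ?]] := sides i; do !split.
Qed.

Lemma milp_feasible_margin x :
  milp_feasible C Q Qt eps y chat x ->
  exists2 yt, admissible eps y yt & milp_obj chat x = margin C Q Qt yt chat.
Proof.
move=> /milp_feasibleP[[int01 onehot1] budget p_sel p_def enc].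
have [yt yt_hot] := onehot_decode int01 onehot1.
have ytpvE : ytpv x = fun c i => onehot R yt c i.
  by apply: boolp.funext => c; apply: boolp.funext => i; rewrite yt_hot.
have ytvE c : ytv x c = binlab R yt c.
  by apply: boolp.funext => i; have [-> _] := enc c; rewrite ytpvE binlab_onehot.
have p_score c : pv x c = score C Q Qt yt c.
  have [_] := enc c; rewrite ytvE => /(kkt_encoding_sound C_ge0 Q_sym Q_psd (binlab_sign yt c)).
  move=> [z_eq alpha_opt]; rewrite p_def (score_opt C_ge0 Q_sym Q_psd B_psd alpha_opt).
  by apply: eq_bigr => i _; rewrite z_eq.
exists yt; first by apply/admissibleE; rewrite ytpvE in budget.
have [ps_ub [c0 nc0 ps_le]] := max_selection_attained p_sel.
rewrite /milp_obj /margin p_score; congr (_ - _); symmetry.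
by apply: (max_other_eq nc0) => [c nc|]; rewrite -!p_score; [exact: ps_ub | exact: ps_le].
Qed.

Hypothesis K_ge2 : (2 <= K)%N.

Lemma margin_milp_feasible yt :
  admissible eps y yt ->
  exists2 x, milp_feasible C Q Qt eps y chat x & milp_obj chat x = margin C Q Qt yt chat.
Proof.
move=> yt_adm; pose w := binlab R yt; pose alpha := opt_alpha C Q yt.
pose g c := dual_grad Q (w c) (alpha c).
have [c0 nc0 c0_max] := exists_argmax_other chat (score C Q Qt yt) K_ge2.
pose x := MilpVar (score C Q Qt yt c0) (score C Q Qt yt) (fun c => if c == c0 then 1 else 0)
  alpha w (fun c i => w c i * alpha c i)
  (fun c i => Num.max (g c i) 0) (fun c i => Num.max (- g c i) 0) (onehot R yt)
  (fun c i => if 0 < g c i then 1 else 0) (fun c i => if g c i < 0 then 1 else 0)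
  (fun c i j => w c i * (w c j * alpha c j)).
exists x; last first.
  by rewrite /milp_obj /margin /= (max_other_eq nc0 c0_max).
apply/milp_feasibleP; split=> /=.
- split=> [c i|i]; first by rewrite /onehot /is01; case: eqP; auto.
  rewrite (bigD1 (yt i)) //= big1 => [|c nc]; first by rewrite /onehot eqxx addr0.
  by rewrite /onehot eq_sym (negbTE nc).
- by move: yt_adm => /admissibleE.
- apply: max_selection_argmax => // c nc; rewrite c0_max //=.
  have := score_bound Q Qt C_ge0 yt c; have := score_bound Q Qt C_ge0 yt c0.
  by rewrite /pU /pL !ler_norml => /andP[? ?] /andP[? ?]; lra.
- by [].
- move=> c; split=> [i|]; first exact: binlab_onehot.
  exact (kkt_encoding_complete Q_sym Q_psd (binlab_sign yt c) (opt_alphaP Q C_ge0 yt c)).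
Qed.

End Certificate.

Theorem theorem3 (R : realType) (K m : nat) (C eps : R)
    (y : 'I_m -> 'I_K) (Q : 'M[R]_m) (Qt : 'rV[R]_m) (chat : 'I_K) :
  (2 <= K)%N -> (1 <= m)%N -> 0 < C -> 0 <= eps <= 1 ->
  Q^T = Q -> psd Q ->
  (exists Qtt : R, psd (block_mx (Qtt%:M : 'M[R]_1) Qt Qt^T Q)) ->
  (forall c, score C Q Qt y c <= score C Q Qt y chat) ->
  exists v : R,
    milp_optval C Q Qt eps y chat v /\
    adv_optval C Q Qt eps y chat v /\
    (cert_robust C Q Qt eps y chat <-> 0 < v).
Proof.
move=> K_ge2 _ C_gt0 /andP[eps_ge0 _] QT_eq Q_psd [q B_psd] _.
have Q_sym i j : Q i j = Q j i by rewrite -{1}QT_eq mxE.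
have [y0 y0_adm y0_min] := admissible_arg_min y (fun yt => margin C Q Qt yt chat) eps_ge0.
exists (margin C Q Qt y0 chat); split; last split.
- split=> [|x /(milp_feasible_margin C_gt0 Q_sym Q_psd B_psd)[yt yt_adm ->]].
    have [x x_feas x_obj] := margin_milp_feasible Qt chat C_gt0 Q_sym Q_psd K_ge2 y0_adm.
    by exists x.
  exact: y0_min.
- by split; [exists y0 | exact: y0_min].
- split=> [robust | v_gt0 yt yt_adm]; first exact: robust.
  exact: lt_le_trans v_gt0 (y0_min yt yt_adm).
Qed.
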